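(* Let $\mathcal{P}$ be a finite poset and $L=\mathfrak{g}^{\prec}(\mathcal{P})$. Then (i) $b(L)\le |\{p\prec q : p\prec q\notin Rel_E(\mathcal{P})\}|-1$, and (ii) $b(L)\le |Rel_{\overline{C}}(\mathcal{P})|$.
   Context: All Lie algebras are over an algebraically closed field $\mathbf{k}$ of characteristic zero. A finite poset $(\mathcal{P},\preceq)$ has underlying set $\{1,\dots,n\}$, labeled so that $x\preceq y$ implies $x\le y$ as integers. Write $x\prec y$ if $x\preceq y$ and $x\ne y$. $Ext(\mathcal{P})$ is the set of minimal and maximal elements of $\mathcal{P}$, and $Rel_E(\mathcal{P})$ is the set of strict relations $p\prec q$ with $p,q\in Ext(\mathcal{P})$. A strict relation $p\prec q$ is covering if there is no $z$ with $p\prec z\prec q$; $Rel_{\overline{C}}(\mathcal{P})$ is the set of non-covering strict relations. The nilpotent Lie poset algebra $\mathfrak{g}^{\prec}(\mathcal{P})$ is the Lie subalgebra of $\mathfrak{gl}(n,\mathbf{k})$ spanned by the matrix units $E_{i,j}$ with $i\prec j$, with bracket $[X,Y]=XY-YX$. The breadth of a Lie algebra $L$ is $b(L)=\max_{x\in L}\operatorname{rank}(\mathrm{ad}_x)$, where $\mathrm{ad}_x=[x,-]$. *)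

From HB Require Import structures.
From mathcomp Require Import all_boot all_order all_algebra.
From mathcomp Require Import boolp.
Set Implicit Arguments. Unset Strict Implicit. Unset Printing Implicit Defensive.
Import GRing.Theory.
Local Open Scope ring_scope.

(* A finite poset on 'I_n (the labels 0..n-1 play the role of 1..n),
   given by a relation [le], labelled naturally: x <= y in P implies x <= y. *)
Definition natural_poset (n : nat) (le : rel 'I_n) : Prop :=
  [/\ reflexive le, antisymmetric le, transitive le &
      forall x y : 'I_n, le x y -> (x <= y)%N].

Definition slt (n : nat) (le : rel 'I_n) (x y : 'I_n) : bool := le x y && (x != y).

Definition minimalb (n : nat) (le : rel 'I_n) (x : 'I_n) : bool :=
  [forall z, ~~ slt le z x].
Definition maximalb (n : nat) (le : rel 'I_n) (x : 'I_n) : bool :=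
  [forall z, ~~ slt le x z].
Definition extb (n : nat) (le : rel 'I_n) (x : 'I_n) : bool :=
  minimalb le x || maximalb le x.

Definition strict_rels (n : nat) (le : rel 'I_n) : {set 'I_n * 'I_n} :=
  [set pq | slt le pq.1 pq.2].
Definition rel_E (n : nat) (le : rel 'I_n) : {set 'I_n * 'I_n} :=
  [set pq | slt le pq.1 pq.2 && (extb le pq.1 && extb le pq.2)].
Definition rel_noncov (n : nat) (le : rel 'I_n) : {set 'I_n * 'I_n} :=
  [set pq | slt le pq.1 pq.2 && [exists z, slt le pq.1 z && slt le z pq.2]].

Definition lie_poset (F : fieldType) (n : nat) (le : rel 'I_n) : {vspace 'M[F]_n} :=
  <<[seq (delta_mx pq.1 pq.2 : 'M[F]_n) | pq <- enum (strict_rels le)]>>%VS.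

Definition ad (F : fieldType) (n : nat) (x : 'M[F]_n) : 'End('M[F]_n) :=
  linfun (fun y : 'M[F]_n => x *m y - y *m x).

Definition ad_rank (F : fieldType) (n : nat) (L : {vspace 'M[F]_n}) (x : 'M[F]_n) : nat :=
  \dim (ad x @: L)%VS.

(* breadth b(L) = max_{x in L} rank(ad_x); ranks are bounded by dim L *)
Definition breadth (F : fieldType) (n : nat) (L : {vspace 'M[F]_n}) : nat :=
  \max_(k < (\dim L).+1 | `[< exists2 x, x \in L & ad_rank L x = k >]) k.

From HB Require Import structures.
From mathcomp Require Import all_boot all_order all_algebra.
From mathcomp Require Import boolp.
Set Implicit Arguments. Unset Strict Implicit. Unset Printing Implicit Defensive.
Import GRing.Theory.
Local Open Scope ring_scope.

(* Both breadth bounds follow from bounding rank(ad_x) on L = g^<(P) for a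
   single x in L; the breadth is then a maximum of such ranks.
   Write S for the strict relations, E = Rel_E(P) and NC = Rel_{\bar C}(P),
   and span(s) for the span of the matrix units E_{p,q} with (p,q) in s, so
   that L = span(S).  Since E_{p,q} E_{c,d} = [q = c] E_{p,d}, products of
   matrix-unit spans are controlled by composing relations:
   (ii) composing two strict relations p < q < d gives a non-covering
        relation p < d, so [x, L] lies in span(NC);
   (i)  a relation p < q of E has p minimal and q maximal, so span(E) is
        central in L.  Writing x = e + y with e in span(E) and y in
        span(S \ E), either y = 0 and ad_x vanishes on L, or y is a nonzero
        vector of span(S \ E) killed by ad_x, and a kernel-dimension count
        gives rank(ad_x) <= dim span(S \ E) - 1.
   The file first proves the dimension count for an arbitrary linear map,
   then the matrix-unit calculus, then the poset facts, then the theorem. *)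

Section KernelDimension.
Variables (K : fieldType) (vT : vectType K).

Lemma dim_limg_addv_kernel (f : 'End(vT)) (U V : {vspace vT}) (y : vT) :
  (U <= lker f)%VS -> y \in V -> y != 0 -> f y = 0 ->
  (\dim (f @: (U + V)) <= (\dim V).-1)%N.
Proof.
move=> kerU yV nz_y fy0.
have imU0 : (f @: U = 0)%VS by apply/eqP; rewrite -lkerE.
have ker_pos : (0 < \dim (V :&: lker f))%N.
  rewrite lt0n dimv_eq0; apply: contra nz_y => /eqP capV0.
  by rewrite -memv0 -capV0 memv_cap yV memv_ker fy0 eqxx.
rewrite limgD imU0 add0v -(limg_ker_dim f V).
by rewrite -(prednK ker_pos) addSn leq_addl.
Qed.

End KernelDimension.

Section MatrixUnits.
Variables (F : fieldType) (n : nat).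
Local Notation M := 'M[F]_n.

Definition commutator (x y : M) : M := x *m y - y *m x.

Fact commutator_is_linear (x : M) : linear (commutator x).
Proof.
move=> a u v; rewrite /commutator mulmxDr mulmxDl -scalemxAr -scalemxAl.
by rewrite scalerBr opprD addrACA.
Qed.

HB.instance Definition _ (x : M) :=
  GRing.isLinear.Build F M M *:%R (commutator x) (commutator_is_linear x).

Lemma adE (x y : M) : ad x y = x *m y - y *m x.
Proof. by have -> : ad x = linfun (commutator x) by []; rewrite lfunE. Qed.

Lemma ad_anti (x y : M) : ad x y = - ad y x.
Proof. by rewrite !adE opprB. Qed.

Lemma mulmx_span (X Y : seq M) (V : {vspace M}) :
  {in X & Y, forall a b, a *m b \in V} ->
  forall a b, a \in <<X>>%VS -> b \in <<Y>>%VS -> a *m b \in V.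
Proof.
move=> XY a b aX bY.
rewrite (coord_span (X := in_tuple X) aX) (coord_span (X := in_tuple Y) bY).
rewrite mulmx_suml; apply: memv_suml => i _.
rewrite -scalemxAl mulmx_sumr; apply: memvZ; apply: memv_suml => j _.
by rewrite -scalemxAr; apply/memvZ/XY; apply: mem_nth.
Qed.

Definition unit_span (s : {set 'I_n * 'I_n}) : {vspace M} :=
  <<[seq delta_mx pq.1 pq.2 | pq <- enum s]>>%VS.

Lemma unit_span_mem (s : {set 'I_n * 'I_n}) (p q : 'I_n) :
  (p, q) \in s -> delta_mx p q \in unit_span s.
Proof. by move=> pq_s; apply/memv_span/mapP; exists (p, q); rewrite ?mem_enum. Qed.

Lemma dim_unit_span (s : {set 'I_n * 'I_n}) : (\dim (unit_span s) <= #|s|)%N.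
Proof. by apply: leq_trans (dim_span _) _; rewrite size_map -cardE. Qed.

Lemma unit_span0 : unit_span set0 = 0%VS.
Proof. by rewrite /unit_span enum_set0 span_nil. Qed.

(* Since E_{p,q} E_{c,d} = [q = c] E_{p,d}, the product of span(s) and
   span(t) lies in span(u) whenever u contains the composite relation. *)
Lemma mulmx_unit_span (s t u : {set 'I_n * 'I_n}) :
  (forall p q d, (p, q) \in s -> (q, d) \in t -> (p, d) \in u) ->
  forall a b, a \in unit_span s -> b \in unit_span t -> a *m b \in unit_span u.
Proof.
move=> comp; apply: mulmx_span => _ _ /mapP[[p q] pq_s ->] /mapP[[c d] cd_t ->].
rewrite mem_enum in pq_s; rewrite mem_enum in cd_t; rewrite /= mul_delta_mx_cond.
case: eqP => [qc | _]; last by rewrite mulr0n mem0v.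
by rewrite mulr1n unit_span_mem // (comp _ q) // qc.
Qed.

End MatrixUnits.

Section PosetAlgebra.
Variables (F : fieldType) (n : nat) (le : rel 'I_n).
Hypothesis hP : natural_poset le.
Local Notation S := (strict_rels le).
Local Notation E := (rel_E le).
Local Notation NC := (rel_noncov le).
Local Notation L := (lie_poset F le).

Lemma slt_trans (a b d : 'I_n) : slt le a b -> slt le b d -> slt le a d.
Proof.
case: hP => _ le_anti le_trans _ /andP[le_ab ne_ab] /andP[le_bd ne_bd].
rewrite /slt (le_trans _ _ _ le_ab le_bd); apply: contra ne_ab => /eqP eq_ad.
by apply/eqP/le_anti; rewrite le_ab eq_ad le_bd.
Qed.

(* In a relation p < q of Rel_E(P), q is maximal (it dominates p, so it
   cannot be minimal) and p is minimal. *)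
Lemma relE_maximal (p q z : 'I_n) : (p, q) \in E -> ~~ slt le q z.
Proof.
rewrite inE /= => /and3P[pq _ /orP[/forallP q_min | /forallP q_max]] //.
by move: (q_min p); rewrite pq.
Qed.

Lemma relE_minimal (p q z : 'I_n) : (p, q) \in E -> ~~ slt le z p.
Proof.
rewrite inE /= => /and3P[pq /orP[/forallP p_min | /forallP p_max] _] //.
by move: (p_max q); rewrite pq.
Qed.

(* Composing two strict relations p < q < d yields a non-covering one,
   hence all products (and commutators) of elements of L lie in span(NC). *)
Lemma mul_lie_poset (a b : 'M[F]_n) : a \in L -> b \in L -> a *m b \in unit_span F NC.
Proof.
apply: mulmx_unit_span => p q d; rewrite !inE /= => pq qd.
by rewrite (slt_trans pq qd); apply/existsP; exists q; rewrite pq qd.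
Qed.

Lemma mul_relE_lie (a b : 'M[F]_n) : a \in unit_span F E -> b \in L -> a *m b = 0.
Proof.
move=> aE bL; apply/eqP; rewrite -memv0 -(unit_span0 F n).
apply: mulmx_unit_span aE bL => p q d pqE.
by rewrite !inE /= (negPf (relE_maximal d pqE)).
Qed.

Lemma mul_lie_relE (a b : 'M[F]_n) : a \in L -> b \in unit_span F E -> a *m b = 0.
Proof.
move=> aL bE; apply/eqP; rewrite -memv0 -(unit_span0 F n).
apply: mulmx_unit_span aL bE => p q d + qdE.
by rewrite !inE /= (negPf (relE_minimal p qdE)).
Qed.

Lemma relE_central (z : 'M[F]_n) : z \in L -> (unit_span F E <= lker (ad z))%VS.
Proof.
move=> zL; apply/subvP => e eE.
by rewrite memv_ker adE mul_lie_relE // mul_relE_lie // subrr.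
Qed.

Lemma lie_poset_split : (L <= unit_span F E + unit_span F (S :\: E))%VS.
Proof.
apply/span_subvP => _ /mapP[[p q] pqS ->]; rewrite mem_enum in pqS.
have [pqE | pqNE] := boolP ((p, q) \in E).
  by apply/(subvP (addvSl _ _))/unit_span_mem.
by apply/(subvP (addvSr _ _))/unit_span_mem; rewrite in_setD pqNE.
Qed.

Lemma ad_rank_noncov (x : 'M[F]_n) : x \in L -> (ad_rank L x <= #|NC|)%N.
Proof.
move=> xL; apply: leq_trans (dim_unit_span F NC); apply: dimvS.
apply/subvP => _ /memv_imgP[b bL ->].
by rewrite adE memvB // mul_lie_poset.
Qed.

(* Part (i): rank(ad_x) <= |S \ Rel_E(P)| - 1.  Split x = e + y along
   lie_poset_split; if y = 0 then x is central, otherwise y = x - e is a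
   nonzero vector of span(S \ E) killed by ad_x. *)
Lemma ad_rank_nonext (x : 'M[F]_n) :
  x \in L -> (ad_rank L x <= #|S :\: E| - 1)%N.
Proof.
move=> xL; rewrite /ad_rank.
have /memv_addP[e eE [y yN x_ey]] := subvP lie_poset_split x xL.
have [y0 | nz_y] := eqVneq y 0.
  have : (L <= lker (ad x))%VS.
    apply/subvP => b bL; rewrite memv_ker ad_anti oppr_eq0 -memv_ker.
    by apply: (subvP (relE_central bL)); rewrite x_ey y0 addr0.
  by rewrite lkerE => /eqP ->; rewrite dimv0.
have ad_xe : ad x e = 0 by apply/eqP; rewrite -memv_ker (subvP (relE_central xL)).
have ad_xy : ad x y = 0.
  have -> : y = x - e by rewrite x_ey addrC addKr.
  by rewrite linearB /= ad_xe adE subrr subr0.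
apply: leq_trans (dimvS (limgS _ lie_poset_split)) _.
apply: leq_trans (dim_limg_addv_kernel (relE_central xL) yN nz_y ad_xy) _.
by rewrite -subn1 leq_sub2r // dim_unit_span.
Qed.

End PosetAlgebra.

Theorem proposition5 (F : closedFieldType) (hF : [pchar F]%R =i pred0)
    (n : nat) (le : rel 'I_n) (hP : natural_poset le) :
  (breadth (lie_poset F le) <= #|strict_rels le :\: rel_E le| - 1)%N /\
  (breadth (lie_poset F le) <= #|rel_noncov le|)%N.
Proof.
by split; apply/bigmax_leqP => k /asboolP[x xL <-];
  [apply: ad_rank_nonext | apply: ad_rank_noncov].
Qed.
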